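(* Let $\alpha$ be an algebraic number. If the minimal polynomial of $\alpha$ over $\mathbb{Q}$ contains a nonzero term of odd degree, then $\mathbb{Q}(\alpha) = \mathbb{Q}(\alpha^2)$. Consequently, for any real number field $K$, the set of generators $\alpha$ of $K$ (i.e. $\mathbb{Q}(\alpha)=K$) whose minimal polynomial contains a nonzero term of odd degree is dense in $\mathbb{R}$.
   Context: A real number field is a field $K\subset\mathbb{R}$ with $[K:\mathbb{Q}]<\infty$. *)

From mathcomp Require Import all_boot all_order all_algebra all_field.
From mathcomp Require Import reals.
Set Implicit Arguments. Unset Strict Implicit. Unset Printing Implicit Defensive.
Import Order.TTheory GRing.Theory Num.Theory.
Local Open Scope ring_scope.

Definition is_subfield (F : fieldType) (S : F -> Prop) : Prop :=
  [/\ S 0, S 1,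
      (forall x y, S x -> S y -> S (x - y)),
      (forall x y, S x -> S y -> S (x * y)) &
      (forall x, S x -> x != 0 -> S x^-1)].

Definition Qadj (F : fieldType) (a : F) : F -> Prop :=
  fun x => forall S : F -> Prop, is_subfield S -> S a -> S x.

Definition algebraic_over_Q (F : fieldType) (a : F) : Prop :=
  exists p : {poly rat}, p != 0 /\ root (map_poly ratr p) a.

Definition is_minpoly (F : fieldType) (a : F) (p : {poly rat}) : Prop :=
  [/\ p \is monic, root (map_poly ratr p) a &
      forall q : {poly rat}, q != 0 -> root (map_poly ratr q) a ->
        (size p <= size q)%N].

Definition minpoly_has_odd_term (F : fieldType) (a : F) : Prop :=
  exists p : {poly rat}, is_minpoly a p /\ exists i : nat, odd i /\ p`_i != 0.

(* K is a real number field: a subfield of R of finite dimension over Q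
   (spanned over Q by a finite list of elements). *)
Definition real_number_field (R : realType) (K : R -> Prop) : Prop :=
  is_subfield K /\
  exists s : seq R, forall x, K x ->
    exists c : seq rat, size c = size s /\
      x = \sum_(i < size s) ratr c`_i * s`_i.

From mathcomp Require Import all_boot all_order all_algebra all_field.
From mathcomp Require Import reals.
From mathcomp Require Import lra zify ring.
From Stdlib Require Import Classical.
Import Order.TTheory GRing.Theory Num.Theory.
Local Open Scope ring_scope.
Set Implicit Arguments. Unset Strict Implicit.

(* If p(X) = E(X^2) + X O(X^2) is the minimal polynomial of a and some odd
   coefficient of p is nonzero, then O(X^2) is a nonzero polynomial of smaller
   degree than p, so O(a^2) != 0 and a = - E(a^2) / O(a^2) lies in Q(a^2).
   A real number field K has a primitive element g, and so has every rational
   shift g + t. If g + t1 and g + t2 (t1 != t2) both had even minimal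
   polynomials, the minimal polynomial f of g would satisfy
   f(w) = f(-w - 2 t1) = f(-w - 2 t2), i.e. be periodic with the nonzero period
   2 (t1 - t2), which no nonzero polynomial is. Hence among any two rational
   shifts of g into a given interval one has a minimal polynomial with an odd
   term. *)

Section SubfieldClosure.
Variables (F : fieldType) (S : F -> Prop).
Hypothesis subS : is_subfield S.

Lemma subfieldN x : S x -> S (- x).
Proof. by case: subS => S0 _ Ssub _ _ Sx; rewrite -sub0r; apply: Ssub. Qed.

Lemma subfieldD x y : S x -> S y -> S (x + y).
Proof.
case: subS => _ _ Ssub _ _ Sx Sy.
by rewrite -[y]opprK; apply: Ssub => //; apply: subfieldN.
Qed.

Lemma subfield_nat n : S n%:R.
Proof.
case: subS => S0 S1 _ _ _; elim: n => [|n IH] //.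
by rewrite -addn1 natrD; apply: subfieldD.
Qed.

Lemma subfield_int (z : int) : S z%:~R.
Proof.
case: z => n; first exact: subfield_nat.
by rewrite NegzE mulrNz; apply/subfieldN/subfield_nat.
Qed.

Lemma subfield_ratr (c : rat) : S (ratr c).
Proof.
case: subS => S0 _ _ Smul Sinv; apply: Smul; first exact: subfield_int.
(* in positive characteristic the denominator may vanish, and then [0^-1 = 0] *)
have [->|nz] := eqVneq (denq c)%:~R (0 : F); first by rewrite invr0.
by apply: Sinv => //; apply: subfield_int.
Qed.

Lemma subfieldX x i : S x -> S (x ^+ i).
Proof.
case: subS => _ S1 _ Smul _ Sx.
by elim: i => [|i IH]; rewrite ?expr0 // exprS; apply: Smul.
Qed.

Lemma subfield_horner (q : {poly rat}) y : S y -> S (map_poly ratr q).[y].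
Proof.
have ratr0 : ratr 0 = 0 :> F by rewrite -[0]/(0%:~R) ratr_int.
move=> Sy; rewrite horner_coef; apply: (big_ind S); first by case: subS.
  exact: subfieldD.
by move=> i _; rewrite coef_map_id0 //; case: subS => _ _ _ Smul _;
  apply: Smul; [apply: subfield_ratr | apply: subfieldX].
Qed.

End SubfieldClosure.

Section RationalPolynomials.
Variable F : numFieldType.

Definition Qpoly (y x : F) := exists q : {poly rat}, (map_poly ratr q).[y] = x.

Definition Qannih (y : F) (p : {poly rat}) := p != 0 /\ root (map_poly ratr p) y.

Definition minpoly_size (y : F) (d : nat) :=
  (exists p, Qannih y p /\ size p = d) /\ forall q, Qannih y q -> (d <= size q)%N.

Lemma Qpoly_subfield (S : F -> Prop) y x : is_subfield S -> S y -> Qpoly y x -> S x.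
Proof. by move=> subS Sy [q <-]; apply: subfield_horner. Qed.

Lemma Qpoly_trans z y x : Qpoly z y -> Qpoly y x -> Qpoly z x.
Proof.
by move=> [q0 <-] [q <-]; exists (q \Po q0); rewrite map_comp_poly horner_comp.
Qed.

Lemma QpolyX z y i : Qpoly z y -> Qpoly z (y ^+ i).
Proof. by move=> [q <-]; exists (q ^+ i); rewrite rmorphXn horner_exp. Qed.

Lemma Qpoly_shift y t x : Qpoly y x -> Qpoly (y + ratr t) x.
Proof.
apply: Qpoly_trans; exists ('X - t%:P).
by rewrite rmorphB /= map_polyX map_polyC !hornerE addrK.
Qed.

Lemma minpoly_size_exists y p : Qannih y p -> exists d, minpoly_size y d.
Proof.
elim: {p}(size p) {-2}p (leqnn (size p)) => [|N IH] p sp ann_p.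
  by case: ann_p sp => nz _; rewrite leqn0 size_poly_eq0 (negPf nz).
have [[q [ann_q sq]]|nq] := classic (exists q, Qannih y q /\ (size q < size p)%N).
  by apply: (IH q) => //; rewrite -ltnS (leq_trans sq).
exists (size p); split; first by exists p.
by move=> q ann_q; rewrite leqNgt; apply/negP => sq; apply: nq; exists q.
Qed.

Lemma minpoly_size_gt0 y d : minpoly_size y d -> (0 < d)%N.
Proof. by move=> [[p [[nz _] <-]] _]; rewrite size_poly_gt0. Qed.

Lemma ratr_span_dependent m k (v : 'I_m -> F) (w : 'I_k -> F)
    (A : 'I_m -> 'I_k -> rat) :
  (k < m)%N -> (forall i, v i = \sum_j ratr (A i j) * w j) ->
  exists c : 'I_m -> rat, (exists i, c i != 0) /\ \sum_i ratr (c i) * v i = 0.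
Proof.
move=> km hv; pose M : 'M[rat]_(m, k) := \matrix_(i, j) A i j.
have : kermx M != 0.
  rewrite kermx_eq0 -row_leq_rank -ltnNge.
  exact: leq_ltn_trans (rank_leq_col M) km.
case/matrix0Pn => i0 [j0 nz]; exists (fun i => kermx M i0 i); split.
  by exists j0.
under eq_bigr do rewrite hv mulr_sumr.
rewrite exchange_big /=; apply: big1 => j _.
have ker0 : (kermx M *m M) i0 j = 0 by rewrite mulmx_ker mxE.
rewrite mxE in ker0.
transitivity ((@ratr F) (\sum_i kermx M i0 i * M i j) * w j).
  rewrite rmorph_sum /= mulr_suml; apply: eq_bigr => i _.
  by rewrite rmorphM /= /M mxE mulrA.
by rewrite ker0 rmorph0 mul0r.
Qed.

Definition ord_poly n (c : 'I_n -> rat) : {poly rat} :=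
  \poly_(i < n) oapp c 0 (insub i).

Lemma horner_ord_poly n (c : 'I_n -> rat) (y : F) :
  (map_poly ratr (ord_poly c)).[y] = \sum_i ratr (c i) * y ^+ i.
Proof.
rewrite (@horner_coef_wide _ n); last by rewrite size_map_poly size_poly.
by apply: eq_bigr => i _; rewrite coef_map coef_poly ltn_ord valK.
Qed.

Lemma ord_poly_neq0 n (c : 'I_n -> rat) i : c i != 0 -> ord_poly c != 0.
Proof.
apply: contraNneq => /(congr1 (fun p : {poly rat} => p`_i)).
by rewrite coef_poly ltn_ord valK coef0 /= => ->.
Qed.

Lemma powers_dependent_annih n (c : 'I_n -> rat) (y : F) :
  (exists i, c i != 0) -> \sum_i ratr (c i) * y ^+ i = 0 ->
  exists p, Qannih y p /\ (size p <= n)%N.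
Proof.
move=> [i nzc] dep; exists (ord_poly c); split; last exact: size_poly.
by split; [apply: ord_poly_neq0 nzc | rewrite /root horner_ord_poly dep].
Qed.

Lemma Qpoly_reduce y d x : minpoly_size y d -> Qpoly y x ->
  exists r : 'I_(d.-1) -> rat, x = \sum_j ratr (r j) * y ^+ j.
Proof.
move=> [[m [[nzm rm] sm]] _] [q <-]; exists (fun j => (q %% m)`_j).
rewrite {1}(divp_eq q m) rmorphD rmorphM /= !hornerE (eqP rm) mulr0 add0r.
rewrite (@horner_coef_wide _ d.-1); last first.
  rewrite size_map_poly -ltnS -sm prednK ?ltn_modp // sm.
  by case: (d) sm => // /eqP; rewrite size_poly_eq0 (negPf nzm).
by apply: eq_bigr => j _; rewrite coef_map.
Qed.

Lemma minpoly_size_lt y z x d d' :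
    minpoly_size y d -> minpoly_size z d' -> Qpoly z y -> Qpoly z x ->
  ~ Qpoly y x -> (d < d')%N.
Proof.
move=> my mz zy zx nyx; rewrite ltnNge; apply/negP => d'd.
case: d my d'd (minpoly_size_gt0 my) => // d my d'd _.
pose v (i : 'I_d.+1) := if (i < d)%N then y ^+ i else x.
have hv i : exists r : 'I_d'.-1 -> rat, v i = \sum_j ratr (r j) * z ^+ j.
  by apply: Qpoly_reduce mz _; rewrite /v; case: ifP => _ //; apply: QpolyX.
have [A hA] := fin_all_exists hv.
have [|c [nzc dep]] := ratr_span_dependent _ hA; first by case: (d') d'd.
rewrite big_ord_recr /= {2}/v ltnn in dep.
pose c' (i : 'I_d) := c (widen_ord (leqnSn d) i).
have dep' : \sum_i ratr (c' i) * y ^+ i + ratr (c ord_max) * x = 0.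
  by rewrite -[RHS]dep; congr (_ + _); apply: eq_bigr => i _; rewrite /v /= ltn_ord.
have [cmax0|nz_cmax] := eqVneq (c ord_max) 0.
  have nz_c' : exists i, c' i != 0.
    have [i0 nz_i0] := nzc; have lt_i0 : (i0 < d)%N.
      rewrite ltn_neqAle -ltnS ltn_ord andbT; apply: contraNneq nz_i0 => e.
      by rewrite (_ : i0 = ord_max) ?cmax0 //; apply/val_inj/e.
    by exists (Ordinal lt_i0); rewrite /c' (_ : widen_ord _ _ = i0) //; apply: val_inj.
  have dep_y : \sum_i ratr (c' i) * y ^+ i = 0.
    by move: dep'; rewrite cmax0 rmorph0 mul0r addr0.
  have [p [ann_p sp]] := powers_dependent_annih nz_c' dep_y.
  by have [_ /(_ p ann_p)] := my; rewrite leqNgt ltnS sp.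
apply: nyx; exists (- (c ord_max)^-1 *: ord_poly c').
rewrite linearZ /= hornerZ horner_ord_poly.
move/eqP: dep'; rewrite addr_eq0 => /eqP ->.
rewrite rmorphN rmorphV ?unitfE //= mulrN mulNr opprK mulKf //.
by rewrite fmorph_eq0.
Qed.

End RationalPolynomials.

Section PrimitiveElement.
Variables (F : numFieldType) (K : F -> Prop) (s : seq F).
Hypothesis subK : is_subfield K.
Hypothesis spanK : forall x, K x ->
  exists c : seq rat, size c = size s /\ x = \sum_(i < size s) ratr c`_i * s`_i.

Lemma annih_size_bound y : K y -> exists p, Qannih y p /\ (size p <= (size s).+1)%N.
Proof.
move=> Ky; pose v (i : 'I_(size s).+1) := y ^+ i.
have hv i : exists r : 'I_(size s) -> rat,
    v i = \sum_j ratr (r j) * (fun j : 'I_(size s) => s`_j) j.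
  by rewrite /v; have [c [_ ->]] := spanK (subfieldX subK i Ky); exists (fun j => c`_j).
have [A hA] := fin_all_exists hv.
have [c [nzc dep]] := ratr_span_dependent (leqnn _) hA.
exact: powers_dependent_annih nzc dep.
Qed.

Lemma minpoly_size_bound y d : K y -> minpoly_size y d -> (d <= (size s).+1)%N.
Proof.
by move=> Ky [_ min_d]; have [p [ann_p sp]] := annih_size_bound Ky;
  apply: leq_trans (min_d _ ann_p) sp.
Qed.

Lemma primitive_element_step y d : K y -> minpoly_size y d ->
    ~ (forall x, K x -> Qpoly y x) ->
  exists z d', [/\ K z, minpoly_size z d' & (d < d')%N].
Proof.
move=> Ky my not_gen.
have [x not_Kx_yx] := not_all_ex_not _ _ not_gen.
have [Kx nyx] := imply_to_and _ _ not_Kx_yx.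
have [px [[nzpx rx] _]] := annih_size_bound Kx.
have [py [[nzpy ry] _]] := annih_size_bound Ky.
have [n [zx zy]] := pchar0_PET nzpx rx nzpy ry (@pchar_num _).
set z := y *+ n - x in zx zy.
have Kz : K z.
  case: subK => _ _ Ksub Kmul _; apply: Ksub => //.
  by rewrite -mulr_natr; apply: Kmul => //; apply: subfield_nat.
have [pz [ann_pz _]] := annih_size_bound Kz.
have [d' md'] := minpoly_size_exists ann_pz.
by exists z, d'; split => //; apply: minpoly_size_lt my md' zy zx nyx.
Qed.

(* The size of the minimal polynomial strictly grows along the steps and is
   bounded by [(size s).+1], so the iteration stops at a generator. *)
Lemma primitive_element : exists g, K g /\ forall x, K x -> Qpoly g x.
Proof.
have K0 : K 0 by case: subK.
have [p0 [ann_p0 _]] := annih_size_bound K0.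
have [d0 md0] := minpoly_size_exists ann_p0.
suff: forall N y d, K y -> minpoly_size y d -> ((size s).+1 - d <= N)%N ->
    exists g, K g /\ forall x, K x -> Qpoly g x.
  by apply; [exact: K0 | exact: md0 | exact: leqnn].
elim=> [|N IH] y d Ky my dN;
  have [gen_y|not_gen] := classic (forall x, K x -> Qpoly y x);
  try by exists y.
all: have [z [d' [Kz mz lt_dd']]] := primitive_element_step Ky my not_gen.
all: have := minpoly_size_bound Kz mz.
  by lia.
by move=> ?; apply: (IH z d') => //; lia.
Qed.

End PrimitiveElement.

Lemma hornerN_even (R : comNzRingType) (f : {poly R}) x :
  (forall i, odd i -> f`_i = 0) -> f.[- x] = f.[x].
Proof.
move=> even_f; rewrite !horner_coef; apply: eq_bigr => i _.
have [odd_i|even_i] := boolP (odd i); first by rewrite even_f // !mul0r.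
by rewrite exprNn -signr_odd (negPf even_i) mul1r.
Qed.

Lemma periodic_poly_eq0 (R : numDomainType) (P : {poly R}) y h :
  h != 0 -> root P y -> (forall w, P.[w + h] = P.[w]) -> P = 0.
Proof.
move=> nz_h Py periodic; apply/eqP/contraT => nz_P.
have roots k : root P (y + k%:R * h).
  elim: k => [|k IH]; first by rewrite mul0r addr0.
  by rewrite /root -addn1 natrD mulrDl mul1r addrA periodic.
have := max_poly_roots nz_P (rs := mkseq (fun k => y + k%:R * h) (size P)).
rewrite size_mkseq ltnn; apply.
  by apply/allP => z /mapP [k _ ->].
apply: mkseq_uniq => k l /addrI /(mulIf nz_h) /eqP.
by rewrite eqr_nat => /eqP.
Qed.

Section MinimalPolynomial.
Variable F : numFieldType.

Lemma minpoly_exists (y : F) p : Qannih y p -> exists f, is_minpoly y f.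
Proof.
move=> ann_p; have [d [[q [[nzq rq] sq]] min_d]] := minpoly_size_exists ann_p.
have nz_lq : (lead_coef q)^-1 != 0 by rewrite invr_eq0 lead_coef_eq0.
exists ((lead_coef q)^-1 *: q); split.
- by rewrite monicE lead_coefZ mulVf // lead_coef_eq0.
- by rewrite linearZ /= rootZ ?fmorph_eq0.
- by move=> r nzr rr; rewrite size_scale // sq; apply: min_d.
Qed.

Lemma minpoly_shift (y : F) t f : is_minpoly y f ->
  is_minpoly (y + ratr t) (f \Po ('X - t%:P)).
Proof.
move=> [mf rf min_f]; split.
- rewrite monicE lead_coef_comp ?size_XsubC // lead_coefXsubC expr1n mulr1.
  exact/eqP/monicP.
- rewrite /root map_comp_poly horner_comp rmorphB /= map_polyX map_polyC.
  by rewrite !hornerE addrK.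
- move=> q nzq rq; rewrite size_comp_poly2 ?size_XsubC //.
  have -> : size q = size (q \Po ('X + t%:P)) by rewrite size_comp_poly2 ?size_XaddC.
  apply: min_f; first by rewrite comp_poly2_eq0 ?size_XaddC.
  by rewrite /root map_comp_poly horner_comp rmorphD /= map_polyX map_polyC !hornerE.
Qed.

Lemma minpoly_reflect (y : F) t f : is_minpoly y f ->
    ~ minpoly_has_odd_term (y + ratr t) ->
  forall w, (map_poly ratr f).[w] = (map_poly (@ratr F) f).[- w - ratr t *+ 2].
Proof.
move=> mf no_odd w.
have even_ft i : odd i -> (map_poly (@ratr F) (f \Po ('X - t%:P)))`_i = 0.
  move=> odd_i; rewrite coef_map /=; apply/eqP; rewrite fmorph_eq0.
  apply/negPn/negP => nz; apply: no_odd; exists (f \Po ('X - t%:P)).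
  by split; [apply: minpoly_shift | exists i].
have := hornerN_even (w + ratr t) even_ft.
rewrite !map_comp_poly !horner_comp rmorphB /= map_polyX map_polyC !hornerE.
by rewrite addrK => <-; rewrite opprD mulr2n opprD addrA.
Qed.

Lemma odd_term_shift (y : F) p t1 t2 : Qannih y p -> t1 != t2 ->
  minpoly_has_odd_term (y + ratr t1) \/ minpoly_has_odd_term (y + ratr t2).
Proof.
move=> ann_p neq_t; apply: NNPP => /not_or_and [no_odd1 no_odd2].
have [f mf] := minpoly_exists ann_p.
pose h : F := ratr t1 *+ 2 - ratr t2 *+ 2.
have nz_h : h != 0.
  by rewrite /h -mulrnBl mulrn_eq0 /= subr_eq0 (inj_eq (fmorph_inj _)).
have nz_f : map_poly (@ratr F) f != 0.
  by rewrite map_poly_eq0; case: mf => /monic_neq0.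
apply/(negP nz_f)/eqP/(periodic_poly_eq0 (y := y) nz_h); first by case: mf.
move=> w; rewrite (minpoly_reflect mf no_odd1 w) (minpoly_reflect mf no_odd2).
by congr horner; rewrite /h; ring.
Qed.

End MinimalPolynomial.

Lemma odd_poly_neq0 (R : nzRingType) (p : {poly R}) i :
  odd i -> p`_i != 0 -> odd_poly p != 0.
Proof.
move=> odd_i; apply: contraNneq => /(congr1 (fun q : {poly R} => q`_i./2)).
rewrite coef_odd_poly coef0.
have -> : (i./2).*2.+1 = i by rewrite -[RHS]odd_double_half odd_i.
by move=> ->.
Qed.

Lemma size_odd_poly_sqr_lt (R : idomainType) (p : {poly R}) :
  odd_poly p != 0 -> (size (odd_poly p \Po 'X^2) < size p)%N.
Proof.
move=> nz_O; have := size_comp_poly (odd_poly p) ('X^2 : {poly R}).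
rewrite size_polyXn /=; have := size_odd_poly p.
have : (0 < size (odd_poly p \Po 'X^2))%N.
  by rewrite size_poly_gt0 comp_poly_eq0 ?size_polyXn.
have : (0 < size (odd_poly p))%N by rewrite size_poly_gt0.
rewrite -divn2 -!subn1; move: (size (_ \Po _)) (size (odd_poly p)) (size p).
by move=> m n k; lia.
Qed.

Section OddTermGenerator.
Variable F : numFieldType.

Lemma horner_map_even_odd (p : {poly rat}) (a : F) :
  (map_poly ratr p).[a] =
    (map_poly ratr (even_poly p)).[a ^+ 2] + (map_poly ratr (odd_poly p)).[a ^+ 2] * a.
Proof.
rewrite -{1}(poly_even_odd p) rmorphD rmorphM /= !map_comp_poly map_polyX.
by rewrite map_polyXn hornerD hornerM !horner_comp hornerXn hornerX.
Qed.

Lemma odd_minpoly_subfield_sqr (a : F) (S : F -> Prop) :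
  minpoly_has_odd_term a -> is_subfield S -> S (a ^+ 2) -> S a.
Proof.
move=> [p [[_ rp min_p] [i [odd_i nz_pi]]]] subS Sa2.
have nz_O := odd_poly_neq0 odd_i nz_pi.
have nz_Oa2 : (map_poly (@ratr F) (odd_poly p)).[a ^+ 2] != 0.
  apply: contraTneq (size_odd_poly_sqr_lt nz_O) => Oa2; rewrite -leqNgt.
  apply: min_p; first by rewrite comp_poly_eq0 ?size_polyXn.
  by rewrite /root map_comp_poly horner_comp map_polyXn hornerXn Oa2.
have -> : a = - (map_poly ratr (even_poly p)).[a ^+ 2] /
              (map_poly (@ratr F) (odd_poly p)).[a ^+ 2].
  apply: (canRL (mulfK nz_Oa2)); apply/eqP.
  by rewrite -addr_eq0 mulrC addrC -horner_map_even_odd.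
case: subS (subS) => _ _ _ Smul Sinv subS.
by apply: Smul; [apply: subfieldN | apply: Sinv]; try apply: subfield_horner.
Qed.

Lemma Qadj_sqr (a : F) : minpoly_has_odd_term a ->
  forall x, Qadj a x <-> Qadj (a ^+ 2) x.
Proof.
move=> odd_a x; split => Qx S subS Sa.
  by apply: Qx => //; apply: odd_minpoly_subfield_sqr Sa.
by apply: Qx => //; case: subS => _ _ _ Smul _; rewrite expr2; apply: Smul.
Qed.

End OddTermGenerator.

Lemma Qadj_primitive (F : numFieldType) (K : F -> Prop) g :
    is_subfield K -> K g -> (forall x, K x -> Qpoly g x) ->
  forall x, Qadj g x <-> K x.
Proof.
move=> subK Kg gen_g x; split; first by apply.
by move=> Kx S subS Sg; apply: Qpoly_subfield subS Sg (gen_g x Kx).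
Qed.

Lemma odd_term_generator_between (R : realType) (K : R -> Prop) :
  real_number_field K -> forall u v : R, u < v ->
  exists a : R, u < a < v /\ (forall x, Qadj a x <-> K x) /\ minpoly_has_odd_term a.
Proof.
move=> [subK [s spanK]] u v uv.
have [g [Kg gen_g]] := primitive_element subK spanK.
have [p [ann_p _]] := annih_size_bound subK spanK Kg.
pose δ := (v - u) / 2; have δ_gt0 : 0 < δ by rewrite /δ; lra.
have [r0] := @rat_in_itvoo R (g - δ) g ltac:(lra).
rewrite in_itv /= => /andP [r0_gt r0_lt].
have [r1] := @rat_in_itvoo R u (v - δ) ltac:(rewrite /δ; lra).
rewrite in_itv /= => /andP [r1_gt r1_lt].
have [r2] := rat_in_itvoo r1_gt; rewrite in_itv /= => /andP [r2_gt r2_lt].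
have generator r : u < ratr r < v - δ ->
    minpoly_has_odd_term (g + ratr (r - r0)) ->
  exists a : R, u < a < v /\ (forall x, Qadj a x <-> K x) /\ minpoly_has_odd_term a.
  move=> /andP [r_gt r_lt] odd_a; exists (g + ratr (r - r0)); split => //.
    by rewrite rmorphB /=; apply/andP; split; lra.
  split => //; apply: Qadj_primitive => //.
    by apply: (subfieldD subK) => //; apply: subfield_ratr.
  by move=> x Kx; apply/Qpoly_shift/gen_g.
have neq_t : r1 - r0 != r2 - r0.
  by rewrite (inj_eq (addIr _)); apply: contraTneq r2_lt => ->; rewrite ltxx.
by case: (odd_term_shift ann_p neq_t) => odd_a; apply: generator odd_a;
  apply/andP; split; lra.
Qed.

Theorem claim3p5 :
  (forall a : algC, algebraic_over_Q a -> minpoly_has_odd_term a ->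
     forall x : algC, Qadj a x <-> Qadj (a ^+ 2) x) /\
  (forall (R : realType) (K : R -> Prop), real_number_field K ->
     forall u v : R, u < v ->
       exists a : R, u < a < v /\ (forall x, Qadj a x <-> K x) /\
                     minpoly_has_odd_term a).
Proof.
split; first by move=> a _; apply: Qadj_sqr.
exact: odd_term_generator_between.
Qed.
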